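(* For a complete residuated lattice $L=(L,* )$ the following are equivalent: (i) $L$ satisfies the law of double negation, i.e. $(a\to0)\to0=a$ for all $a\in L$; (ii) for every $L$-context $(X,Y,\phi)$ and all $X'\subseteq X$, $Y'\subseteq Y$: $(X',Y',(\neg\phi)_{X',Y'})$ is a reduct of $(X,Y,\neg\phi)$ in RST if and only if $(X',Y',\phi_{X',Y'})$ is a reduct of $(X,Y,\phi)$ in FCA; (iii) for every $L$-context $(X,Y,\phi)$ and all $X'\subseteq X$, $Y'\subseteq Y$: if $(X',Y',(\neg\phi)_{X',Y'})$ is a reduct of $(X,Y,\neg\phi)$ in RST, then $(X',Y',\phi_{X',Y'})$ is a reduct of $(X,Y,\phi)$ in FCA.
   Context: $L=(L,* )$ is a complete residuated lattice: a complete lattice with bottom $0$ and top $1$, with a commutative associative operation $*$ with unit $1$ satisfying $a*\bigvee_i b_i=\bigvee_i a*b_i$; $\to$ is its residuum ($a*b\le c\iff a\le b\to c$); $\neg a=a\to 0$. An $L$-context is $(X,Y,\phi)$ with $X,Y$ sets and $\phi\colon X\times Y\to L$; $(\neg\phi)(x,y)=\neg\phi(x,y)$. $L^X$ is the set of maps $X\to L$ with $L$-order $L^X(\mu,\mu')=\bigwedge_x(\mu(x)\to\mu'(x))$. For $\mu\in L^X$, $\lambda\in L^Y$: $(\phi^\uparrow\mu)(y)=\bigwedge_{x}(\mu(x)\to\phi(x,y))$, $(\phi^\downarrow\lambda)(x)=\bigwedge_{y}(\lambda(y)\to\phi(x,y))$, $(\phi^\exists\mu)(y)=\bigvee_x\mu(x)*\phi(x,y)$,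 $(\phi^\forall\lambda)(x)=\bigwedge_y(\phi(x,y)\to\lambda(y))$. $\mathcal{M}\phi=\{\mu\in L^X\mid\phi^\downarrow\phi^\uparrow\mu=\mu\}$, $\mathcal{K}\phi=\{\mu\in L^X\mid\phi^\forall\phi^\exists\mu=\mu\}$, both with the $L$-order inherited from $L^X$. For $X'\subseteq X$, $Y'\subseteq Y$: $\phi_{X',Y'}$ is the restriction of $\phi$ to $X'\times Y'$; $\mu_{X'}$ the restriction of $\mu\in L^X$; $\underline{\mu'}\in L^X$ the extension of $\mu'\in L^{X'}$ by $0$. An isomorphism of complete $L$-lattices is an $L$-isometric bijection ($P(p,p')=Q(fp,fp')$). Reduct in FCA: $(X',Y',\phi_{X',Y'})$ is a reduct of $(X,Y,\phi)$ in FCA if the map $E_1\colon\mathcal{M}\phi_{X',Y'}\to\mathcal{M}\phi$, $\mu'\mapsto\phi^\downarrow\phi^\uparrow\underline{\mu'}$, is an isomorphism of complete $L$-lattices (it is known that this is equivalent to each of $R_1\mu=(\phi_{X',Y'})^\downarrow(\phi_{X',Y'})^\uparrow\mu_{X'}$, $R_2\mu=((\phi_{X,Y'})^\downarrow(\phi_{X,Y'})^\uparrow\mu)_{X'}$, $E_2\mu'=(\phi_{X,Y'})^\downarrow(\phi_{X,Y'})^\uparrow\underline{\mu'}$ being an isomorphism, and to: for every $\mu\in L^X$ there is $\mu'\in L^{X'}$ with $\phi^\uparrow\mu=(\phi_{X',Y})^\uparrow\mu'$, and for every $\lambda\in L^Y$ there is $\lambda'\in L^{Y'}$ with $\phi^\downarrow\lambda=(\phi_{X,Y'})^\downarrow\lambda'$).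 Reduct in RST: $(X',Y',\psi_{X',Y'})$ is a reduct of $(X,Y,\psi)$ in RST if the map $F_1\colon\mathcal{K}\psi_{X',Y'}\to\mathcal{K}\psi$, $\mu'\mapsto\psi^\forall\psi^\exists\underline{\mu'}$, is an isomorphism of complete $L$-lattices (equivalently, any one of $S_1\mu=(\psi_{X',Y'})^\forall(\psi_{X',Y'})^\exists\mu_{X'}$, $S_2\mu=((\psi_{X,Y'})^\forall(\psi_{X,Y'})^\exists\mu)_{X'}$, $F_2\mu'=(\psi_{X,Y'})^\forall(\psi_{X,Y'})^\exists\underline{\mu'}$ is an isomorphism). *)

From Stdlib Require Import Classical ClassicalEpsilon.



Record CRL := {
  car :> Type;
  le : car -> car -> Prop;
  le_refl : forall a, le a a;
  le_antisym : forall a b, le a b -> le b a -> a = b;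
  le_trans : forall a b c, le a b -> le b c -> le a c;
  sup : (car -> Prop) -> car;
  sup_ub : forall (S : car -> Prop) a, S a -> le a (sup S);
  sup_least : forall (S : car -> Prop) b, (forall a, S a -> le a b) -> le (sup S) b;
  mul : car -> car -> car;
  one : car;
  mul_assoc : forall a b c, mul a (mul b c) = mul (mul a b) c;
  mul_comm : forall a b, mul a b = mul b a;
  mul_one : forall a, mul a one = a;
  one_top : forall a, le a one;
  res : car -> car -> car;
  res_adj : forall a b c, le (mul a b) c <-> le a (res b c)
}.

Section Ops.
Variable L : CRL.

Definition inf (S : L -> Prop) : L := sup L (fun l => forall s, S s -> le L l s).
Definition zero : L := sup L (fun _ => False).
Definition neg (a : L) : L := res L a zero.
Definition bigsup {I : Type} (f : I -> L) : L := sup L (fun l => exists i, l = f i).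
Definition biginf {I : Type} (f : I -> L) : L := inf (fun l => exists i, l = f i).

Definition Lord {X : Type} (m m' : X -> L) : L := biginf (fun x => res L (m x) (m' x)).

Definition up {X Y : Type} (phi : X -> Y -> L) (m : X -> L) : Y -> L :=
  fun y => biginf (fun x => res L (m x) (phi x y)).
Definition down {X Y : Type} (phi : X -> Y -> L) (l : Y -> L) : X -> L :=
  fun x => biginf (fun y => res L (l y) (phi x y)).
Definition exi {X Y : Type} (phi : X -> Y -> L) (m : X -> L) : Y -> L :=
  fun y => bigsup (fun x => mul L (m x) (phi x y)).
Definition all {X Y : Type} (phi : X -> Y -> L) (l : Y -> L) : X -> L :=
  fun x => biginf (fun y => res L (phi x y) (l y)).

Definition Mset {X Y : Type} (phi : X -> Y -> L) (m : X -> L) : Prop :=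
  forall x, down phi (up phi m) x = m x.
Definition Kset {X Y : Type} (phi : X -> Y -> L) (m : X -> L) : Prop :=
  forall x, all phi (exi phi m) x = m x.

Definition negctx {X Y : Type} (phi : X -> Y -> L) : X -> Y -> L :=
  fun x y => neg (phi x y).

Definition restr {X Y : Type} (X' : X -> Prop) (Y' : Y -> Prop) (phi : X -> Y -> L)
  : sig X' -> sig Y' -> L :=
  fun x y => phi (proj1_sig x) (proj1_sig y).

Definition ext0 {X : Type} (X' : X -> Prop) (m : sig X' -> L) : X -> L :=
  fun x => match excluded_middle_informative (X' x) with
           | left h => m (exist X' x h)
           | right _ => zero
           end.

(* f is an isomorphism of complete L-lattices from P (subset of L^A) onto
   Q (subset of L^B): an L-isometric bijection. *)
Definition Liso {A B : Type} (P : (A -> L) -> Prop) (Q : (B -> L) -> Prop)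
  (f : (A -> L) -> (B -> L)) : Prop :=
  (forall m, P m -> Q (f m)) /\
  (forall m m', P m -> P m' -> (forall b, f m b = f m' b) -> forall a, m a = m' a) /\
  (forall n, Q n -> exists m, P m /\ forall b, f m b = n b) /\
  (forall m m', P m -> P m' -> Lord m m' = Lord (f m) (f m')).

Definition FCA_reduct {X Y : Type} (phi : X -> Y -> L) (X' : X -> Prop) (Y' : Y -> Prop)
  : Prop :=
  Liso (Mset (restr X' Y' phi)) (Mset phi)
       (fun m' => down phi (up phi (ext0 X' m'))).

Definition RST_reduct {X Y : Type} (psi : X -> Y -> L) (X' : X -> Prop) (Y' : Y -> Prop)
  : Prop :=
  Liso (Kset (restr X' Y' psi)) (Kset psi)
       (fun m' => all psi (exi psi (ext0 X' m'))).

End Ops.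

(* Under double negation a -> b = ~b -> ~a and a * ~b = ~(a -> b), so the closure operator
   all o exi of the negated context ~phi coincides with down o up of phi; the two notions of
   reduct then literally coincide.  Conversely, take one object with the two attributes
   a and ~~a and keep only the attribute ~~a.  Since ~~~a = ~a, both columns of ~phi are
   equal, so this is always a reduct in RST; but an FCA reduct would have to realise the
   extent a through an extent of the column ~~a, which lies above ~~a and below a. *)

From Stdlib Require Import ClassicalEpsilon FunctionalExtensionality PropExtensionality.

Section ResiduatedLattice.
Variable L : CRL.

Lemma eq_of_lower_bounds (u v : L) : (forall x, le L x u <-> le L x v) -> u = v.
Proof. intro H. apply le_antisym; [apply H | apply H]; apply le_refl. Qed.

Lemma inf_lb (S : L -> Prop) s : S s -> le L (inf L S) s.
Proof. intro Hs. apply sup_least. intros l Hl. exact (Hl s Hs). Qed.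

Lemma inf_glb (S : L -> Prop) b : (forall s, S s -> le L b s) -> le L b (inf L S).
Proof. intro H. apply sup_ub. exact H. Qed.

Lemma biginf_lb {I} (f : I -> L) i : le L (biginf L f) (f i).
Proof. apply inf_lb. exists i; reflexivity. Qed.

Lemma biginf_glb {I} (f : I -> L) b : (forall i, le L b (f i)) -> le L b (biginf L f).
Proof. intro H. apply inf_glb. intros s [i ->]. apply H. Qed.

Lemma bigsup_ub {I} (f : I -> L) i : le L (f i) (bigsup L f).
Proof. apply sup_ub. exists i; reflexivity. Qed.

Lemma bigsup_least {I} (f : I -> L) b : (forall i, le L (f i) b) -> le L (bigsup L f) b.
Proof. intro H. apply sup_least. intros a [i ->]. apply H. Qed.

Lemma biginf_same_range {I J} (f : I -> L) (g : J -> L) :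
  (forall i, exists j, g j = f i) -> (forall j, exists i, f i = g j) ->
  biginf L f = biginf L g.
Proof.
  intros Hfg Hgf. apply le_antisym; apply biginf_glb.
  - intro j. destruct (Hgf j) as [i <-]. apply biginf_lb.
  - intro i. destruct (Hfg i) as [j <-]. apply biginf_lb.
Qed.

Lemma bigsup_same_range {I J} (f : I -> L) (g : J -> L) :
  (forall i, exists j, g j = f i) -> (forall j, exists i, f i = g j) ->
  bigsup L f = bigsup L g.
Proof.
  intros Hfg Hgf. apply le_antisym; apply bigsup_least.
  - intro i. destruct (Hfg i) as [j <-]. apply bigsup_ub.
  - intro j. destruct (Hgf j) as [i <-]. apply bigsup_ub.
Qed.

Lemma mul_one_l a : mul L (one L) a = a.
Proof. rewrite mul_comm. apply mul_one. Qed.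

Lemma mul_res_le a b : le L (mul L a (res L a b)) b.
Proof. rewrite mul_comm. apply res_adj, le_refl. Qed.

Lemma mul_mono_r a b c : le L a b -> le L (mul L c a) (mul L c b).
Proof.
  intro H. rewrite !(mul_comm L c). apply res_adj.
  eapply le_trans; [exact H|]. apply res_adj, le_refl.
Qed.

Lemma le_res a b : le L b (res L a b).
Proof.
  apply res_adj. eapply le_trans; [apply mul_mono_r, one_top|].
  rewrite mul_one. apply le_refl.
Qed.

Lemma res_anti_l a b c : le L a b -> le L (res L b c) (res L a c).
Proof.
  intro H. apply res_adj. eapply le_trans; [apply mul_mono_r, H|].
  rewrite mul_comm. apply mul_res_le.
Qed.

Lemma res_one_l b : res L (one L) b = b.
Proof.
  apply eq_of_lower_bounds. intro x. rewrite <- res_adj, mul_one. tauto.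
Qed.

Lemma res_neg b c : res L b (neg L c) = neg L (mul L b c).
Proof.
  apply eq_of_lower_bounds. intro x. unfold neg. rewrite <- !res_adj, mul_assoc. tauto.
Qed.

Lemma neg_anti a b : le L a b -> le L (neg L b) (neg L a).
Proof. apply res_anti_l. Qed.

Lemma le_neg_neg a : le L a (neg L (neg L a)).
Proof. apply res_adj, mul_res_le. Qed.

Lemma neg_neg_neg a : neg L (neg L (neg L a)) = neg L a.
Proof. apply le_antisym; [apply neg_anti, le_neg_neg | apply le_neg_neg]. Qed.

Lemma neg_bigsup {I} (f : I -> L) : neg L (bigsup L f) = biginf L (fun i => neg L (f i)).
Proof.
  apply le_antisym.
  - apply biginf_glb. intro i. apply neg_anti, bigsup_ub.
  - apply res_adj. rewrite mul_comm. apply res_adj, bigsup_least. intro i.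
    apply res_adj. rewrite mul_comm. apply res_adj.
    exact (biginf_lb (fun i => neg L (f i)) i).
Qed.

Section DoubleNegation.
Hypothesis neg_negK : forall a : L, neg L (neg L a) = a.

Lemma mul_neg b c : mul L b (neg L c) = neg L (res L b c).
Proof. rewrite <- (neg_negK c) at 2. rewrite res_neg, neg_negK. reflexivity. Qed.

Lemma res_neg_swap p q : res L (neg L p) q = res L (neg L q) p.
Proof.
  rewrite <- (neg_negK q) at 1. rewrite <- (neg_negK p) at 2.
  rewrite !res_neg, mul_comm. reflexivity.
Qed.

Lemma all_exi_negctx {X Y} (phi : X -> Y -> L) (m : X -> L) :
  all L (negctx L phi) (exi L (negctx L phi) m) = down L phi (up L phi m).
Proof.
  extensionality x. unfold all, exi, down, up, negctx. f_equal. extensionality y.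
  rewrite res_neg_swap. f_equal.
  replace (fun x' => mul L (m x') (neg L (phi x' y)))
    with (fun x' => neg L (res L (m x') (phi x' y)))
    by (extensionality x'; symmetry; apply mul_neg).
  rewrite neg_bigsup. f_equal. extensionality x'. apply neg_negK.
Qed.

Lemma Kset_negctx {X Y} (phi : X -> Y -> L) : Kset L (negctx L phi) = Mset L phi.
Proof.
  extensionality m. apply propositional_extensionality.
  unfold Kset, Mset. rewrite all_exi_negctx. tauto.
Qed.

Lemma RST_reduct_negctx_iff_FCA_reduct {X Y} (phi : X -> Y -> L) X' Y' :
  RST_reduct L (negctx L phi) X' Y' <-> FCA_reduct L phi X' Y'.
Proof.
  unfold RST_reduct, FCA_reduct.
  change (restr L X' Y' (negctx L phi)) with (negctx L (restr L X' Y' phi)).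
  rewrite !Kset_negctx.
  replace (fun m' => all L (negctx L phi) (exi L (negctx L phi) (ext0 L X' m')))
    with (fun m' => down L phi (up L phi (ext0 L X' m')))
    by (extensionality m'; symmetry; apply all_exi_negctx).
  tauto.
Qed.

End DoubleNegation.

Lemma down_up_extensive {X Y} (phi : X -> Y -> L) (m : X -> L) x :
  le L (m x) (down L phi (up L phi m) x).
Proof.
  apply biginf_glb. intro y. apply res_adj. unfold up.
  eapply le_trans; [apply mul_mono_r, (biginf_lb (fun x' => res L (m x') (phi x' y)) x)|].
  apply mul_res_le.
Qed.

Lemma le_down {X Y} (phi : X -> Y -> L) (l : Y -> L) x b :
  (forall y, le L b (phi x y)) -> le L b (down L phi l x).
Proof.
  intro H. apply biginf_glb. intro y. eapply le_trans; [apply H | apply le_res].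
Qed.

Section FullObjectSet.
Variables (X Y : Type) (psi : X -> Y -> L) (Y' : Y -> Prop).

Definition full_set : X -> Prop := fun _ => True.

Lemma ext0_full (m : sig full_set -> L) x : ext0 L full_set m x = m (exist _ x I).
Proof.
  unfold ext0. destruct (excluded_middle_informative (full_set x)) as [h | h].
  - destruct h. reflexivity.
  - elim h. exact I.
Qed.

Lemma sig_full_eta (x : sig full_set) : x = exist _ (proj1_sig x) I.
Proof. destruct x as [x []]. reflexivity. Qed.

Hypothesis column_in_Y' : forall y, exists y' : sig Y', forall x, psi x y = psi x (proj1_sig y').

Lemma exi_restr_full (m : sig full_set -> L) y' :
  exi L (restr L full_set Y' psi) m y' = exi L psi (ext0 L full_set m) (proj1_sig y').
Proof.
  apply bigsup_same_range.
  - intro x. exists (proj1_sig x). rewrite ext0_full, <- sig_full_eta. reflexivity.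
  - intro x. exists (exist _ x I). rewrite ext0_full. reflexivity.
Qed.

Lemma all_exi_restr_full (m : sig full_set -> L) x :
  all L (restr L full_set Y' psi) (exi L (restr L full_set Y' psi) m) x
  = all L psi (exi L psi (ext0 L full_set m)) (proj1_sig x).
Proof.
  apply biginf_same_range.
  - intro y'. exists (proj1_sig y'). rewrite exi_restr_full. reflexivity.
  - intro y. destruct (column_in_Y' y) as [y' Hy']. exists y'.
    unfold restr. rewrite exi_restr_full, Hy'. f_equal.
    unfold exi. f_equal. extensionality x'. rewrite Hy'. reflexivity.
Qed.

Lemma Kset_restr_full_ext0 (m : sig full_set -> L) :
  Kset L (restr L full_set Y' psi) m ->
  forall x, all L psi (exi L psi (ext0 L full_set m)) x = ext0 L full_set m x.
Proof.
  intros Hm x. rewrite ext0_full, <- (Hm (exist _ x I)), all_exi_restr_full. reflexivity.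
Qed.

Lemma RST_reduct_full_set : RST_reduct L psi full_set Y'.
Proof.
  split; [| split; [| split]].
  - intros m Hm x. pose proof (Kset_restr_full_ext0 m Hm) as Hfix.
    replace (all L psi (exi L psi (ext0 L full_set m))) with (ext0 L full_set m)
      by (extensionality x'; symmetry; apply Hfix).
    apply Hfix.
  - intros m m' Hm Hm' Heq x. specialize (Heq (proj1_sig x)).
    rewrite Kset_restr_full_ext0, Kset_restr_full_ext0, !ext0_full, <- sig_full_eta in Heq;
      assumption.
  - intros n Hn. exists (fun x => n (proj1_sig x)).
    assert (Hext : ext0 L full_set (fun x => n (proj1_sig x)) = n)
      by (extensionality x; apply ext0_full).
    split.
    + intro x. rewrite all_exi_restr_full, Hext. apply Hn.
    + intro x. rewrite Hext. apply Hn.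
  - intros m m' Hm Hm'. apply biginf_same_range.
    + intro x. exists (proj1_sig x).
      rewrite !Kset_restr_full_ext0, !ext0_full, <- sig_full_eta by assumption. reflexivity.
    + intro x. exists (exist _ x I).
      rewrite !Kset_restr_full_ext0, !ext0_full by assumption. reflexivity.
Qed.

End FullObjectSet.

Definition dn_context (a : L) : unit -> bool -> L :=
  fun _ y => if y then a else neg L (neg L a).

Definition kept_attribute : bool -> Prop := fun y => y = false.

Lemma RST_reduct_dn_context a :
  RST_reduct L (negctx L (dn_context a)) (full_set unit) kept_attribute.
Proof.
  apply RST_reduct_full_set. intro y.
  exists (exist kept_attribute false eq_refl). intros [].
  destruct y; unfold negctx, dn_context; simpl; [symmetry; apply neg_neg_neg | reflexivity].
Qed.

Lemma Mset_dn_context_const a : Mset L (dn_context a) (fun _ => a).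
Proof.
  intro x. apply le_antisym.
  - eapply le_trans; [apply (biginf_lb _ true)|]. simpl.
    apply le_trans with (res L (one L) a); [apply res_anti_l | rewrite res_one_l; apply le_refl].
    apply biginf_glb. intro. apply res_adj. rewrite mul_one_l. apply le_refl.
  - apply le_down. intros []; [apply le_refl | apply le_neg_neg].
Qed.

Lemma neg_neg_le_of_FCA_reduct_dn_context a :
  FCA_reduct L (dn_context a) (full_set unit) kept_attribute -> le L (neg L (neg L a)) a.
Proof.
  intros [_ [_ [Hsurj _]]].
  destruct (Hsurj (fun _ => a) (Mset_dn_context_const a)) as [m [Hm Hma]].
  apply le_trans with (m (exist _ tt I)).
  - rewrite <- (Hm (exist _ tt I)). apply le_down. intros [y Hy]. unfold restr. simpl.
    rewrite Hy. apply le_refl.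
  - rewrite <- (Hma tt).
    pose proof (down_up_extensive (dn_context a) (ext0 L (full_set unit) m) tt) as Hext.
    rewrite ext0_full in Hext. exact Hext.
Qed.

Lemma neg_negK_of_RST_reduct_imp_FCA_reduct :
  (forall (X Y : Type) (phi : X -> Y -> L) (X' : X -> Prop) (Y' : Y -> Prop),
      RST_reduct L (negctx L phi) X' Y' -> FCA_reduct L phi X' Y') ->
  forall a : L, neg L (neg L a) = a.
Proof.
  intros H a. apply le_antisym; [| apply le_neg_neg].
  apply neg_neg_le_of_FCA_reduct_dn_context, H, RST_reduct_dn_context.
Qed.

End ResiduatedLattice.

Theorem mainTheorem8 (L : CRL) :
  ((forall a : L, neg L (neg L a) = a) <->
   (forall (X Y : Type) (phi : X -> Y -> L) (X' : X -> Prop) (Y' : Y -> Prop),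
      RST_reduct L (negctx L phi) X' Y' <-> FCA_reduct L phi X' Y')) /\
  ((forall a : L, neg L (neg L a) = a) <->
   (forall (X Y : Type) (phi : X -> Y -> L) (X' : X -> Prop) (Y' : Y -> Prop),
      RST_reduct L (negctx L phi) X' Y' -> FCA_reduct L phi X' Y')).
Proof.
  assert (dn_reducts : (forall a : L, neg L (neg L a) = a) ->
    forall (X Y : Type) (phi : X -> Y -> L) (X' : X -> Prop) (Y' : Y -> Prop),
      RST_reduct L (negctx L phi) X' Y' <-> FCA_reduct L phi X' Y')
    by (intros DN X Y phi X' Y'; apply RST_reduct_negctx_iff_FCA_reduct, DN).
  split; split.
  - exact dn_reducts.
  - intro H. apply neg_negK_of_RST_reduct_imp_FCA_reduct.
    intros X Y phi X' Y'. apply H.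
  - intros DN X Y phi X' Y'. apply dn_reducts, DN.
  - apply neg_negK_of_RST_reduct_imp_FCA_reduct.
Qed.
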